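(* The set $$S=\{(p,q)\in(0,1)^2:\ \mathbb{P}^{(1,1)}_{p,q}(\tau=+\infty)>0\}$$ is an open subset of $(0,1)^2$.
   Context: Cooperative model: for $p,q\in(0,1)$, a Markov chain $(X_n,Y_n)_{n\ge0}$ on $\mathbb{N}^2$ whose transition law from state $(x,y)$ is $\mu_{(x,y)}=\mathrm{Bin}(2,q)^{*(x+y)}\otimes\mathrm{Bin}(2,p)^{*\min(x,y)}$, i.e. given the past, $X_{n+1}\sim\mathrm{Bin}(2(X_n+Y_n),q)$ and $Y_{n+1}\sim\mathrm{Bin}(2\min(X_n,Y_n),p)$ are independent. $\mathbb{P}^{(x,y)}_{p,q}$ denotes the law of this process started from $(x,y)$. $Z_n=\min(X_n,Y_n)$ and $\tau=\inf\{n\ge0: Z_n=0\}$. *)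

From Stdlib Require Import Reals Arith.
From Coquelicot Require Import Coquelicot.
Open Scope R_scope.

Definition binom_pmf (N : nat) (r : R) (k : nat) : R :=
  if Nat.leb k N then Binomial.C N k * r ^ k * (1 - r) ^ (N - k) else 0.

(* Transition probability of the cooperative chain:
   mu_(x,y)(x',y') = Bin(2(x+y),q)(x') * Bin(2 min(x,y),p)(y')
   (Bin(2,q)^{*(x+y)} = Bin(2(x+y),q), Bin(2,p)^{*min(x,y)} = Bin(2 min(x,y),p)). *)
Definition trans (p q : R) (x y x' y' : nat) : R :=
  binom_pmf (2 * (x + y)) q x' * binom_pmf (2 * Nat.min x y) p y'.

(* surv p q n x y = P^{(x,y)}_{p,q}(tau > n) = P(Z_0 > 0, ..., Z_n > 0),
   computed by the first-step (Markov) decomposition; the sums range over the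
   support {0..2(x+y)} x {0..2 min(x,y)} of mu_(x,y). *)
Fixpoint surv (p q : R) (n x y : nat) : R :=
  if Nat.eqb (Nat.min x y) 0 then 0 else
  match n with
  | O => 1
  | S m =>
      sum_f_R0 (fun x' =>
        sum_f_R0 (fun y' => trans p q x y x' y' * surv p q m x' y')
          (2 * Nat.min x y))
        (2 * (x + y))
  end.

(* P^{(x,y)}_{p,q}(tau = +oo) = lim_n P(tau > n)  (continuity from above;
   the sequence is nonincreasing in [0,1], so the limit exists). *)
Definition survival_prob (p q : R) (x y : nat) : R :=
  real (Lim_seq (fun n => surv p q n x y)).

Definition S_set (p q : R) : Prop :=
  0 < p < 1 /\ 0 < q < 1 /\ 0 < survival_prob p q 1 1.

(* Let [a] be the probability that the chain started at [(k, k)] has [Z_n >= 2k].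
   The probability of extinction by time [n] is submultiplicative when initial
   states are added, so if [a > 2/3] the extinction probability from [(k, k)] stays
   below [1/2] along the times [jn] (it is at most [(1 - a) + a (1/2)^2]); since
   [(1, 1)] reaches [(2^k, 2^k)] with positive probability, the chain started at
   [(1, 1)] survives.  Conversely, if it survives with probability [s > 0], then from
   [(k, k)] it survives with probability at least [1 - (1 - s)^k >= 9/10] for large
   [k], while it cannot linger in [0 < Z < 2k], where it dies in one step with
   probability at least [(1 - p)^(4k)]; hence [a > 2/3] for some [n].  Since [a] is
   a polynomial in [(p, q)], the condition [a > 2/3] is open. *)

From Stdlib Require Import Reals Lra Lia Classical_Prop.
From Coquelicot Require Import Coquelicot.
Open Scope R_scope.

Lemma pow_antitone x m n : 0 <= x <= 1 -> (m <= n)%nat -> x ^ n <= x ^ m.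
Proof.
  intros Hx H; induction H as [|n _ IH]; [lra|].
  simpl; pose proof (pow_le x n (proj1 Hx)); nra.
Qed.

Lemma small_term_of_telescoping (u v : nat -> R) c eps :
  0 < c -> 0 < eps -> (forall n, 0 <= u n <= 1) -> (forall n, c * v n <= u n - u (S n)) ->
  exists n, v n < eps.
Proof.
  intros Hc Heps Hu Hdrop.
  destruct (classic (exists n, v n < eps)) as [H|H]; [exact H | exfalso].
  assert (Hdecay : forall N, u N <= 1 - INR N * (c * eps)).
  { induction N as [|N IH]; [simpl; specialize (Hu 0%nat); lra|].
    assert (eps <= v N) by (apply Rnot_lt_le; intros HN; apply H; eauto).
    specialize (Hdrop N); rewrite S_INR; nra. }
  destruct (INR_unbounded (1 / (c * eps))) as [N HN].
  specialize (Hdecay N); specialize (Hu N).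
  assert (1 < INR N * (c * eps)); [|lra].
  apply (Rmult_lt_compat_r (c * eps)) in HN; [|nra].
  unfold Rdiv in HN; rewrite Rmult_1_l, Rinv_l in HN by nra; lra.
Qed.

Lemma Lim_seq_decr_glb (u : nat -> R) m :
  (forall n, u (S n) <= u n) -> (forall n, m <= u n) ->
  (forall n, real (Lim_seq u) <= u n) /\
  (forall c, (forall n, c <= u n) -> c <= real (Lim_seq u)).
Proof.
  intros Hdecr Hlow.
  assert (Hle : forall c, (forall n, c <= u n) -> Rbar_le c (Lim_seq u)).
  { intros c Hc; rewrite <- (Lim_seq_const c); apply Lim_seq_le_loc; exists 0%nat; auto. }
  assert (Hup : Rbar_le (Lim_seq u) (u 0%nat)).
  { rewrite <- (Lim_seq_const (u 0%nat)); apply Lim_seq_le_loc; exists 0%nat.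
    intros n _; induction n; [lra | eapply Rle_trans; eauto]. }
  pose proof (Lim_seq_correct u (ex_lim_seq_decr u Hdecr)) as Hlim.
  pose proof (Hle m Hlow) as Hm.
  destruct (Lim_seq u) as [l| |]; simpl in *; try contradiction.
  split; [apply (is_lim_seq_decr_compare u l Hlim Hdecr)|].
  intros c Hc; exact (Hle c Hc).
Qed.

Lemma continuous_R2_eps_delta (F : R * R -> R) p q eps :
  continuous F (p, q) -> 0 < eps -> exists d, 0 < d /\
    forall p' q', Rabs (p' - p) < d -> Rabs (q' - q) < d -> Rabs (F (p', q') - F (p, q)) < eps.
Proof.
  intros H He; apply filterlim_locally with (eps := mkposreal eps He) in H.
  destruct H as [d Hd]; exists d; split; [apply cond_pos|].
  intros p' q' H1 H2; apply (Hd (p', q')); split; assumption.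
Qed.

Lemma C_pos n k : 0 < Binomial.C n k.
Proof.
  unfold Binomial.C; apply Rdiv_lt_0_compat; [apply INR_fact_lt_0|].
  apply Rmult_lt_0_compat; apply INR_fact_lt_0.
Qed.

Lemma binom_pmf_nonneg N r k : 0 <= r <= 1 -> 0 <= binom_pmf N r k.
Proof.
  intros Hr; unfold binom_pmf; destruct (Nat.leb k N); [|lra].
  apply Rmult_le_pos; [apply Rmult_le_pos|]; [left; apply C_pos | apply pow_le; lra ..].
Qed.

Lemma binom_pmf_S N r k :
  binom_pmf (S N) r k =
  (1 - r) * binom_pmf N r k + r * match k with O => 0 | S j => binom_pmf N r j end.
Proof.
  unfold binom_pmf; destruct k as [|j].
  - simpl; rewrite !C_n_0, Nat.sub_0_r; ring.
  - destruct (Nat.leb_spec (S j) (S N)), (Nat.leb_spec (S j) N), (Nat.leb_spec j N);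
      try lia; try ring.
    + rewrite <- pascal by lia.
      replace (S N - S j)%nat with (S (N - S j)) by lia.
      replace (N - j)%nat with (S (N - S j)) by lia; simpl; ring.
    + replace j with N by lia; rewrite !Nat.sub_diag, !C_n_n; simpl; ring.
Qed.

Definition binom_expect (N : nat) (r : R) (h : nat -> R) : R :=
  sum_f_R0 (fun k => binom_pmf N r k * h k) N.

Section BinomExpect.
Variable r : R.

Lemma binom_expect_ext N h h' :
  (forall k, (k <= N)%nat -> h k = h' k) -> binom_expect N r h = binom_expect N r h'.
Proof. intros H; apply sum_eq; intros i Hi; rewrite H; auto. Qed.

Lemma binom_expect_plus N f g :
  binom_expect N r (fun k => f k + g k) = binom_expect N r f + binom_expect N r g.
Proof. unfold binom_expect; rewrite <- plus_sum; apply sum_eq; intros; ring. Qed.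

Lemma binom_expect_scal_l N c f :
  binom_expect N r (fun k => c * f k) = c * binom_expect N r f.
Proof. unfold binom_expect; rewrite scal_sum; apply sum_eq; intros; ring. Qed.

Lemma binom_expect_scal_r N c f :
  binom_expect N r (fun k => f k * c) = binom_expect N r f * c.
Proof. unfold binom_expect; rewrite Rmult_comm, scal_sum; apply sum_eq; intros; ring. Qed.

Lemma binom_expect_const N c : binom_expect N r (fun _ => c) = c.
Proof.
  unfold binom_expect; rewrite <- scal_sum.
  assert (Hmass : sum_f_R0 (binom_pmf N r) N = 1).
  { rewrite <- (pow1 N); replace 1 with (r + (1 - r)) at 1 by ring.
    rewrite binomial; apply sum_eq; intros i Hi; unfold binom_pmf.
    apply Nat.leb_le in Hi; rewrite Hi; reflexivity. }
  rewrite Hmass; ring.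
Qed.

Lemma binom_expect_0 h : binom_expect 0 r h = h 0%nat.
Proof. unfold binom_expect, binom_pmf; simpl; rewrite C_n_0; ring. Qed.

Lemma binom_expect_S N h :
  binom_expect (S N) r h =
  (1 - r) * binom_expect N r h + r * binom_expect N r (fun k => h (S k)).
Proof.
  unfold binom_expect.
  rewrite (sum_eq _ (fun k => binom_pmf N r k * h k * (1 - r) +
     match k with O => 0 | S j => binom_pmf N r j end * h k * r))
    by (intros; rewrite binom_pmf_S; ring).
  rewrite plus_sum, <- !scal_sum; f_equal; f_equal.
  - simpl sum_f_R0 at 1; unfold binom_pmf at 2.
    destruct (Nat.leb_spec (S N) N); [lia | ring].
  - rewrite decomp_sum by lia; simpl; ring.
Qed.

Lemma binom_expect_S' N h :
  binom_expect (S N) r h = binom_expect N r (fun k => (1 - r) * h k + r * h (S k)).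
Proof. rewrite binom_expect_S, binom_expect_plus, !binom_expect_scal_l; reflexivity. Qed.

Lemma binom_expect_add N1 N2 h :
  binom_expect (N1 + N2) r h =
  binom_expect N1 r (fun i => binom_expect N2 r (fun j => h (i + j)%nat)).
Proof.
  revert h; induction N2 as [|N2 IH]; intros h.
  - rewrite Nat.add_0_r; apply binom_expect_ext; intros.
    rewrite binom_expect_0, Nat.add_0_r; reflexivity.
  - rewrite Nat.add_succ_r, binom_expect_S', IH; apply binom_expect_ext; intros i _.
    rewrite binom_expect_S'; apply binom_expect_ext; intros j _.
    rewrite Nat.add_succ_r; reflexivity.
Qed.

Lemma binom_expect_ind0 N :
  binom_expect N r (fun k => if Nat.eqb k 0 then 1 else 0) = (1 - r) ^ N.
Proof.
  induction N as [|N IH]; [rewrite binom_expect_0; simpl; ring|].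
  rewrite binom_expect_S, IH, (binom_expect_ext _ _ (fun _ => 0)) by reflexivity.
  rewrite binom_expect_const; simpl; ring.
Qed.

Hypothesis Hr : 0 <= r <= 1.

Lemma binom_expect_le N f g :
  (forall k, (k <= N)%nat -> f k <= g k) -> binom_expect N r f <= binom_expect N r g.
Proof.
  intros H; apply sum_Rle; intros n Hn.
  apply Rmult_le_compat_l; [apply binom_pmf_nonneg|]; auto.
Qed.

Lemma binom_expect_nonneg N h : (forall k, 0 <= h k) -> 0 <= binom_expect N r h.
Proof.
  intros H; rewrite <- (binom_expect_const N 0); apply binom_expect_le; auto.
Qed.

Lemma binom_expect_le_N N N' h :
  (forall k, h k <= h (S k)) -> (N <= N')%nat -> binom_expect N r h <= binom_expect N' r h.
Proof.
  intros Hh HN; induction HN as [|N' _ IH]; [lra|].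
  apply (Rle_trans _ _ _ IH); rewrite binom_expect_S'; apply binom_expect_le.
  intros k _; specialize (Hh k).
  assert (0 <= r * (h (S k) - h k)) by (apply Rmult_le_pos; lra); lra.
Qed.

Lemma binom_expect_ge_N N N' h :
  (forall k, h (S k) <= h k) -> (N <= N')%nat -> binom_expect N' r h <= binom_expect N r h.
Proof.
  intros Hh HN; induction HN as [|N' _ IH]; [lra|].
  refine (Rle_trans _ _ _ _ IH); rewrite binom_expect_S'; apply binom_expect_le.
  intros k _; specialize (Hh k).
  assert (0 <= r * (h k - h (S k))) by (apply Rmult_le_pos; lra); lra.
Qed.

Lemma binom_expect_ge_top N h : (forall k, 0 <= h k) -> r ^ N * h N <= binom_expect N r h.
Proof.
  revert h; induction N as [|N IH]; intros h Hh.
  - rewrite binom_expect_0; simpl; lra.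
  - rewrite binom_expect_S.
    assert (0 <= (1 - r) * binom_expect N r h)
      by (apply Rmult_le_pos; [lra | apply binom_expect_nonneg; auto]).
    assert (r * (r ^ N * h (S N)) <= r * binom_expect N r (fun k => h (S k)))
      by (apply Rmult_le_compat_l; [lra | apply (IH (fun k => h (S k))); auto]).
    simpl; lra.
Qed.

End BinomExpect.

Section Continuity.
Context {U : UniformSpace}.

Lemma continuous_Rmult (f g : U -> R) x :
  continuous f x -> continuous g x -> continuous (fun z => f z * g z) x.
Proof. apply (continuous_mult f g). Qed.

Lemma continuous_Rplus (f g : U -> R) x :
  continuous f x -> continuous g x -> continuous (fun z => f z + g z) x.
Proof. apply (continuous_plus f g). Qed.

Lemma continuous_pow (f : U -> R) x m : continuous f x -> continuous (fun z => f z ^ m) x.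
Proof.
  intros H; induction m; simpl; [apply continuous_const | apply continuous_Rmult; auto].
Qed.

Lemma continuous_sum_f_R0 (F : U -> nat -> R) x N :
  (forall k, continuous (fun z => F z k) x) -> continuous (fun z => sum_f_R0 (F z) N) x.
Proof. intros H; induction N; simpl; [|apply continuous_Rplus]; auto. Qed.

Lemma continuous_binom_pmf (r : U -> R) x N k :
  continuous r x -> continuous (fun z => binom_pmf N (r z) k) x.
Proof.
  intros Hr; unfold binom_pmf; destruct Nat.leb; [|apply continuous_const].
  apply continuous_Rmult; [apply continuous_Rmult|];
    [apply continuous_const | apply continuous_pow; auto|].
  apply continuous_pow, (continuous_minus (fun _ => 1) r); [apply continuous_const | auto].
Qed.

Lemma continuous_binom_expect (r : U -> R) (h : U -> nat -> R) x N :
  continuous r x -> (forall k, continuous (fun z => h z k) x) ->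
  continuous (fun z => binom_expect N (r z) (h z)) x.
Proof.
  intros Hr Hh; apply (continuous_sum_f_R0 (fun z k => binom_pmf N (r z) k * h z k)).
  intros k; apply continuous_Rmult; auto using continuous_binom_pmf.
Qed.

End Continuity.

Definition trans_op (p q : R) (g : nat -> nat -> R) (x y : nat) : R :=
  binom_expect (2 * (x + y)) q (fun a => binom_expect (2 * Nat.min x y) p (fun b => g a b)).

Fixpoint trans_iter (p q : R) (n : nat) (g : nat -> nat -> R) : nat -> nat -> R :=
  match n with O => g | S m => trans_op p q (trans_iter p q m g) end.

Definition alive (x y : nat) : R := if Nat.eqb (Nat.min x y) 0 then 0 else 1.

Definition monotone2 (g : nat -> nat -> R) : Prop :=
  forall x y x' y', (x <= x')%nat -> (y <= y')%nat -> g x y <= g x' y'.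

Lemma trans_iter_add p q n m g : trans_iter p q (n + m) g = trans_iter p q n (trans_iter p q m g).
Proof. induction n as [|n IH]; simpl; congruence. Qed.

Lemma trans_op_ext p q g h x y :
  (forall a b, g a b = h a b) -> trans_op p q g x y = trans_op p q h x y.
Proof. intros H; apply binom_expect_ext; intros; apply binom_expect_ext; auto. Qed.

Lemma trans_iter_ext p q n g h :
  (forall a b, g a b = h a b) -> forall x y, trans_iter p q n g x y = trans_iter p q n h x y.
Proof. induction n; intros H x y; simpl; [|apply trans_op_ext]; auto. Qed.

Lemma surv_S p q m x y : surv p q (S m) x y = trans_op p q (surv p q m) x y.
Proof.
  simpl surv at 1; unfold trans_op.
  destruct (Nat.eqb_spec (Nat.min x y) 0) as [Hm|Hm].
  - rewrite Hm, (binom_expect_ext _ _ _ (fun _ => 0)), binom_expect_const; [reflexivity|].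
    intros k _; rewrite binom_expect_0; destruct m; simpl; rewrite Nat.min_0_r; reflexivity.
  - unfold binom_expect; apply sum_eq; intros a _; rewrite scal_sum; apply sum_eq; intros b _.
    unfold trans; ring.
Qed.

(* Since [Z = 0] is absorbing, [P(tau > n) = E[alive (X_n, Y_n)]]. *)
Lemma surv_trans_iter p q n x y : surv p q n x y = trans_iter p q n alive x y.
Proof.
  revert x y; induction n as [|n IH]; intros x y; [reflexivity|].
  rewrite surv_S; apply trans_op_ext; auto.
Qed.

Lemma surv_add p q n m x y : surv p q (n + m) x y = trans_iter p q n (surv p q m) x y.
Proof.
  rewrite surv_trans_iter, trans_iter_add.
  apply trans_iter_ext; intros; symmetry; apply surv_trans_iter.
Qed.

Lemma alive_monotone2 : monotone2 alive.
Proof.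
  intros x y x' y' Hx Hy; unfold alive.
  destruct (Nat.eqb_spec (Nat.min x y) 0), (Nat.eqb_spec (Nat.min x' y') 0); lia || lra.
Qed.

Section TransOp.
Variables p q : R.
Hypothesis Hp : 0 <= p <= 1.
Hypothesis Hq : 0 <= q <= 1.

Lemma trans_op_le g h :
  (forall a b, g a b <= h a b) -> forall x y, trans_op p q g x y <= trans_op p q h x y.
Proof. intros H x y; apply binom_expect_le; auto; intros; apply binom_expect_le; auto. Qed.

Lemma trans_op_lin c1 c2 g h x y :
  trans_op p q (fun a b => c1 * g a b + c2 * h a b) x y =
  c1 * trans_op p q g x y + c2 * trans_op p q h x y.
Proof.
  unfold trans_op; rewrite <- !binom_expect_scal_l, <- binom_expect_plus.
  apply binom_expect_ext; intros.
  rewrite <- !binom_expect_scal_l, <- binom_expect_plus; reflexivity.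
Qed.

Lemma trans_op_const c x y : trans_op p q (fun _ _ => c) x y = c.
Proof.
  unfold trans_op; rewrite (binom_expect_ext _ _ _ (fun _ => c)); [apply binom_expect_const|].
  intros; apply binom_expect_const.
Qed.

Lemma trans_op_monotone2 g : monotone2 g -> monotone2 (trans_op p q g).
Proof.
  intros Hg x y x' y' Hx Hy; unfold trans_op.
  apply Rle_trans with
    (binom_expect (2 * (x + y)) q (fun a => binom_expect (2 * Nat.min x' y') p (fun b => g a b))).
  - apply binom_expect_le; auto; intros a _.
    apply binom_expect_le_N; [auto | intros; apply Hg; lia | lia].
  - apply binom_expect_le_N; [auto | | lia]; intros a.
    apply binom_expect_le; auto; intros; apply Hg; lia.
Qed.

Lemma trans_iter_le n g h :
  (forall a b, g a b <= h a b) -> forall x y, trans_iter p q n g x y <= trans_iter p q n h x y.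
Proof. induction n; intros H x y; simpl; [|apply trans_op_le]; auto. Qed.

Lemma trans_iter_lin n c1 c2 g h x y :
  trans_iter p q n (fun a b => c1 * g a b + c2 * h a b) x y =
  c1 * trans_iter p q n g x y + c2 * trans_iter p q n h x y.
Proof.
  revert x y; induction n as [|n IH]; intros x y; [reflexivity|].
  simpl; rewrite (trans_op_ext _ _ _ _ _ _ IH); apply trans_op_lin.
Qed.

Lemma trans_iter_const n c x y : trans_iter p q n (fun _ _ => c) x y = c.
Proof.
  revert x y; induction n as [|n IH]; intros x y; [reflexivity|].
  simpl; rewrite (trans_op_ext _ _ _ (fun _ _ => c)); [apply trans_op_const | auto].
Qed.

Lemma trans_iter_monotone2 n g : monotone2 g -> monotone2 (trans_iter p q n g).
Proof. induction n; simpl; auto using trans_op_monotone2. Qed.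

Lemma surv_monotone2 n : monotone2 (surv p q n).
Proof.
  intros x y x' y' Hx Hy; rewrite !surv_trans_iter.
  apply trans_iter_monotone2; auto using alive_monotone2.
Qed.

Lemma surv_bounds n x y : 0 <= surv p q n x y <= 1.
Proof.
  rewrite surv_trans_iter; split.
  - rewrite <- (trans_iter_const n 0 x y); apply trans_iter_le.
    intros; unfold alive; destruct Nat.eqb; lra.
  - rewrite <- (trans_iter_const n 1 x y); apply trans_iter_le.
    intros; unfold alive; destruct Nat.eqb; lra.
Qed.

Lemma surv_1_le_alive x y : surv p q 1 x y <= alive x y.
Proof.
  pose proof (surv_bounds 1 x y); unfold alive in *; simpl surv in *.
  destruct Nat.eqb; lra.
Qed.

Lemma surv_S_le n x y : surv p q (S n) x y <= surv p q n x y.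
Proof.
  replace (S n) with (n + 1)%nat by lia; rewrite surv_add, (surv_trans_iter p q n).
  apply trans_iter_le, surv_1_le_alive.
Qed.

Lemma surv_antitone n n' x y : (n <= n')%nat -> surv p q n' x y <= surv p q n x y.
Proof. induction 1; [lra | eapply Rle_trans; [apply surv_S_le | auto]]. Qed.

Lemma surv_1_le_kill x y : surv p q 1 x y <= 1 - (1 - p) ^ (2 * Nat.min x y).
Proof.
  rewrite surv_S; unfold trans_op.
  rewrite <- (binom_expect_const q (2 * (x + y)) (1 - (1 - p) ^ (2 * Nat.min x y))).
  apply binom_expect_le; auto; intros a _.
  assert (Hkill : 1 - (1 - p) ^ (2 * Nat.min x y) = binom_expect (2 * Nat.min x y) p
            (fun b => 1 + -1 * (if Nat.eqb b 0 then 1 else 0))).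
  { rewrite binom_expect_plus, binom_expect_scal_l, binom_expect_const,
      binom_expect_ind0; ring. }
  rewrite Hkill.
  apply binom_expect_le; auto; intros b _; simpl surv.
  destruct (Nat.eqb_spec b 0); [subst; rewrite Nat.min_0_r; simpl; lra|].
  destruct Nat.eqb; lra.
Qed.

End TransOp.

Lemma survival_prob_inf p q x y :
  0 <= p <= 1 -> 0 <= q <= 1 ->
  (forall n, survival_prob p q x y <= surv p q n x y) /\
  (forall c, (forall n, c <= surv p q n x y) -> c <= survival_prob p q x y).
Proof.
  intros Hp Hq; apply (Lim_seq_decr_glb _ 0).
  - intros; apply surv_S_le; auto.
  - intros; apply surv_bounds; auto.
Qed.

Lemma continuous_trans_iter h n a b x y :
  continuous (fun z : R * R => trans_iter (fst z) (snd z) n h x y) (a, b).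
Proof.
  revert x y; induction n as [|n IH]; intros x y; simpl; [apply continuous_const|].
  apply (continuous_binom_expect (fun z : R * R => snd z)); [apply continuous_snd|].
  intros k; apply (continuous_binom_expect (fun z : R * R => fst z)); auto.
  apply continuous_fst.
Qed.

Section Extinction.
Variables p q : R.
Hypothesis Hp : 0 <= p <= 1.
Hypothesis Hq : 0 <= q <= 1.

Definition extinct (n x y : nat) : R := 1 - surv p q n x y.

Lemma extinct_bounds n x y : 0 <= extinct n x y <= 1.
Proof. unfold extinct; pose proof (surv_bounds p q Hp Hq n x y); lra. Qed.

Lemma extinct_antitone2 n x y x' y' :
  (x <= x')%nat -> (y <= y')%nat -> extinct n x' y' <= extinct n x y.
Proof.
  intros Hx Hy; unfold extinct.
  pose proof (surv_monotone2 p q Hp Hq n x y x' y' Hx Hy); lra.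
Qed.

Lemma extinct_add n m x y : extinct (n + m) x y = trans_iter p q n (extinct m) x y.
Proof.
  unfold extinct; rewrite surv_add.
  rewrite (trans_iter_ext _ _ _ (fun a b => 1 - surv p q m a b)
    (fun a b => 1 * (fun _ _ => 1) a b + -1 * surv p q m a b))
    by (intros; ring).
  rewrite trans_iter_lin, trans_iter_const by auto; ring.
Qed.

Lemma extinct_S n x y : extinct (S n) x y = trans_op p q (extinct n) x y.
Proof. exact (extinct_add 1 n x y). Qed.

(* The chain started from the sum of two states dominates the superposition of two
   independent chains started from each of them: binomials add and [min] is
   superadditive.  Dying out therefore requires both to die out. *)
Lemma extinct_submult n x1 y1 x2 y2 :
  extinct n (x1 + x2) (y1 + y2) <= extinct n x1 y1 * extinct n x2 y2.
Proof.
  revert x1 y1 x2 y2; induction n as [|n IH]; intros x1 y1 x2 y2.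
  - unfold extinct; simpl surv.
    destruct (Nat.eqb_spec (Nat.min (x1 + x2) (y1 + y2)) 0),
      (Nat.eqb_spec (Nat.min x1 y1) 0), (Nat.eqb_spec (Nat.min x2 y2) 0); lia || lra.
  - rewrite !extinct_S; unfold trans_op.
    replace (2 * (x1 + x2 + (y1 + y2)))%nat with (2 * (x1 + y1) + 2 * (x2 + y2))%nat by lia.
    apply Rle_trans with (binom_expect (2 * (x1 + y1) + 2 * (x2 + y2)) q (fun a =>
       binom_expect (2 * Nat.min x1 y1 + 2 * Nat.min x2 y2) p (fun b => extinct n a b))).
    { apply binom_expect_le; auto; intros a _.
      apply binom_expect_ge_N; [auto | intros; apply extinct_antitone2; lia | lia]. }
    rewrite binom_expect_add, <- binom_expect_scal_r; apply binom_expect_le; auto.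
    intros a1 _; rewrite <- binom_expect_scal_l; apply binom_expect_le; auto.
    intros a2 _; rewrite binom_expect_add, <- binom_expect_scal_r; apply binom_expect_le; auto.
    intros b1 _; rewrite <- binom_expect_scal_l; apply binom_expect_le; auto.
Qed.

Lemma extinct_diag_pow n k : (1 <= k)%nat -> extinct n k k <= extinct n 1 1 ^ k.
Proof.
  induction k as [|k IH]; intros Hk; [lia|].
  destruct k as [|k]; [simpl; lra|].
  replace (S (S k)) with (S k + 1)%nat at 1 2 by lia.
  eapply Rle_trans; [apply extinct_submult|].
  pose proof (extinct_bounds n 1 1); pose proof (extinct_bounds n (S k) (S k)).
  specialize (IH ltac:(lia)); simpl pow in *; nra.
Qed.

End Extinction.

Definition ind_min_ge (m x y : nat) : R := if Nat.leb m (Nat.min x y) then 1 else 0.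

Definition ind_alive_below (m x y : nat) : R :=
  if Nat.eqb (Nat.min x y) 0 then 0 else if Nat.leb m (Nat.min x y) then 0 else 1.

Lemma alive_split m x y :
  (1 <= m)%nat -> alive x y = 1 * ind_alive_below m x y + 1 * ind_min_ge m x y.
Proof.
  intros Hm; unfold alive, ind_alive_below, ind_min_ge.
  destruct (Nat.eqb_spec (Nat.min x y) 0), (Nat.leb_spec m (Nat.min x y)); lia || ring.
Qed.

Section Survival.
Variables p q : R.
Hypothesis Hp : 0 <= p <= 1.
Hypothesis Hq : 0 <= q <= 1.

(* Off [min >= 2k] bound the extinction probability by 1; on it, by its value at
   [(2k, 2k)], which is at most its squared value at [(k, k)]. *)
Lemma extinct_renewal n m k x y :
  extinct p q (n + m) x y <=
  1 - (1 - extinct p q m k k ^ 2) * trans_iter p q n (ind_min_ge (2 * k)) x y.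
Proof.
  set (e := extinct p q m k k); rewrite extinct_add by auto.
  assert (Hpt : forall a b, extinct p q m a b <=
            1 * (fun _ _ => 1) a b + - (1 - e ^ 2) * ind_min_ge (2 * k) a b).
  { intros a b; unfold ind_min_ge; destruct (Nat.leb_spec (2 * k) (Nat.min a b)).
    - eapply Rle_trans; [apply (extinct_antitone2 _ _ Hp Hq m (k + k) (k + k)); lia|].
      eapply Rle_trans; [apply extinct_submult; auto|]; fold e; simpl; lra.
    - pose proof (extinct_bounds p q Hp Hq m a b); lra. }
  eapply Rle_trans; [apply (trans_iter_le p q Hp Hq n _ _ Hpt)|].
  rewrite trans_iter_lin, trans_iter_const by auto; lra.
Qed.

Lemma surv_diag_ge_half k n :
  (1 <= k)%nat -> 2 / 3 < trans_iter p q n (ind_min_ge (2 * k)) k k ->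
  forall m, 1 / 2 <= surv p q m k k.
Proof.
  intros Hk Ha.
  assert (Hn : (1 <= n)%nat).
  { destruct n; [|lia]; cbn [trans_iter] in Ha.
    unfold ind_min_ge in Ha; rewrite Nat.min_id in Ha.
    destruct (Nat.leb_spec (2 * k) k); lia || lra. }
  (* With [e <= 1/2] and [a > 2/3], [1 - (1 - e^2) a <= 1 - (3/4)(2/3) = 1/2]. *)
  assert (Hext : forall j, extinct p q (j * n) k k <= 1 / 2).
  { induction j as [|j IH].
    - unfold extinct; simpl; rewrite Nat.min_id; destruct (Nat.eqb_spec k 0); lia || lra.
    - replace (S j * n)%nat with (n + j * n)%nat by lia.
      eapply Rle_trans; [apply (extinct_renewal n (j * n) k)|].
      pose proof (extinct_bounds p q Hp Hq (j * n) k k).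
      assert (3 / 4 <= 1 - extinct p q (j * n) k k ^ 2) by nra; nra. }
  intros m; apply Rle_trans with (surv p q (m * n) k k).
  - specialize (Hext m); unfold extinct in Hext; lra.
  - apply surv_antitone; auto; nia.
Qed.

(* With probability [q^(4z) p^(2z)] every Bin(2, .) draw is 2, so that both
   coordinates double. *)
Lemma surv_S_diag_ge z m :
  q ^ (4 * z) * p ^ (2 * z) * surv p q m (2 * z) (2 * z) <= surv p q (S m) z z.
Proof.
  assert (Hsurv : forall n a b, 0 <= surv p q n a b) by (intros; apply surv_bounds; auto).
  rewrite surv_S; unfold trans_op; rewrite Nat.min_id.
  replace (2 * (z + z))%nat with (4 * z)%nat by lia.
  rewrite Rmult_assoc; eapply Rle_trans;
    [|apply binom_expect_ge_top; auto; intros; apply binom_expect_nonneg; auto].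
  apply Rmult_le_compat_l; [apply pow_le; lra|].
  eapply Rle_trans; [|apply binom_expect_ge_top; auto].
  apply Rmult_le_compat_l; [apply pow_le; lra|].
  apply surv_monotone2; auto; lia.
Qed.

Lemma surv_1_1_ge_diag t : 0 < p -> 0 < q ->
  exists c, 0 < c /\ forall m, c * surv p q m (2 ^ t) (2 ^ t) <= surv p q (t + m) 1 1.
Proof.
  intros Hp0 Hq0; induction t as [|t [c [Hc IH]]].
  - exists 1; split; [lra|]; intros m; simpl; lra.
  - exists (c * (q ^ (4 * 2 ^ t) * p ^ (2 * 2 ^ t))); split.
    { apply Rmult_lt_0_compat; [|apply Rmult_lt_0_compat]; auto using pow_lt. }
    intros m; replace (S t + m)%nat with (t + S m)%nat by lia.
    eapply Rle_trans; [|apply IH]; rewrite Rmult_assoc.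
    apply Rmult_le_compat_l; [lra|].
    rewrite Nat.pow_succ_r'; apply surv_S_diag_ge.
Qed.

Lemma survival_pos_of_min_ge k n :
  0 < p -> 0 < q -> (1 <= k)%nat -> 2 / 3 < trans_iter p q n (ind_min_ge (2 * k)) k k ->
  0 < survival_prob p q 1 1.
Proof.
  intros Hp0 Hq0 Hk Ha.
  pose proof (surv_diag_ge_half k n Hk Ha) as Hhalf.
  destruct (surv_1_1_ge_diag k Hp0 Hq0) as [c [Hc Hreach]].
  apply Rlt_le_trans with (c / 2); [lra|].
  apply (survival_prob_inf p q 1 1 Hp Hq); intros N.
  eapply Rle_trans; [|apply (surv_antitone p q Hp Hq N (k + N)); lia].
  eapply Rle_trans; [|apply Hreach].
  assert (surv p q N k k <= surv p q N (2 ^ k) (2 ^ k))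
    by (apply surv_monotone2; auto; apply Nat.lt_le_incl, Nat.pow_gt_lin_r; lia).
  specialize (Hhalf N); nra.
Qed.

Lemma surv_diag_large :
  0 < survival_prob p q 1 1 -> exists k, (1 <= k)%nat /\ forall n, 9 / 10 <= surv p q n k k.
Proof.
  intros Hs; set (s := survival_prob p q 1 1) in *.
  destruct (survival_prob_inf p q 1 1 Hp Hq) as [Hle _]; fold s in Hle.
  assert (Hs1 : s <= 1) by (specialize (Hle 0%nat); simpl in Hle; lra).
  destruct (pow_lt_1_zero (1 - s) ltac:(rewrite Rabs_right; lra) (1 / 10)) as [K HK]; [lra|].
  exists (S K); split; [lia|]; intros n.
  specialize (HK (S K) ltac:(lia)); rewrite Rabs_right in HK by (apply Rle_ge, pow_le; lra).
  assert (extinct p q n 1 1 ^ S K <= (1 - s) ^ S K).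
  { apply pow_incr; split; [apply extinct_bounds; auto|].
    unfold extinct; specialize (Hle n); lra. }
  pose proof (extinct_diag_pow p q Hp Hq n (S K) ltac:(lia)).
  unfold extinct in *; lra.
Qed.

(* In one step, from [0 < min < 2k] the chain dies with probability at least
   [(1 - p)^(4k)] (all Bin(2, p) draws are 0). *)
Lemma surv_drop_ge_alive_below k n x y :
  (1 - p) ^ (4 * k) * trans_iter p q n (ind_alive_below (2 * k)) x y <=
  surv p q n x y - surv p q (S n) x y.
Proof.
  replace (S n) with (n + 1)%nat by lia.
  rewrite surv_add, (surv_trans_iter p q n).
  assert (Hpt : forall a b, surv p q 1 a b <=
            1 * alive a b + - (1 - p) ^ (4 * k) * ind_alive_below (2 * k) a b).
  { intros a b.
    pose proof (surv_1_le_alive p q Hp Hq a b); pose proof (surv_1_le_kill p q Hp Hq a b).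
    unfold alive, ind_alive_below in *.
    destruct (Nat.eqb_spec (Nat.min a b) 0); [lra|].
    destruct (Nat.leb_spec (2 * k) (Nat.min a b)); [lra|].
    assert ((1 - p) ^ (4 * k) <= (1 - p) ^ (2 * Nat.min a b)) by (apply pow_antitone; lra || lia).
    lra. }
  pose proof (trans_iter_le p q Hp Hq n _ _ Hpt x y) as H.
  rewrite trans_iter_lin in H; lra.
Qed.

Lemma min_ge_mass_of_survival :
  p < 1 -> 0 < survival_prob p q 1 1 ->
  exists k n, (1 <= k)%nat /\ 2 / 3 < trans_iter p q n (ind_min_ge (2 * k)) k k.
Proof.
  intros Hp1 Hs.
  destruct (surv_diag_large Hs) as [k [Hk Hsurv]].
  destruct (small_term_of_telescoping (fun n => surv p q n k k)
              (fun n => trans_iter p q n (ind_alive_below (2 * k)) k k)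
              ((1 - p) ^ (4 * k)) (1 / 10)) as [n Hn].
  - apply pow_lt; lra.
  - lra.
  - intros; apply surv_bounds; auto.
  - intros; apply surv_drop_ge_alive_below.
  - exists k, n; split; [exact Hk|].
    specialize (Hsurv n); rewrite surv_trans_iter in Hsurv.
    rewrite (trans_iter_ext _ _ _ _ _ (fun a b => alive_split (2 * k) a b ltac:(lia))),
      trans_iter_lin in Hsurv by auto.
    lra.
Qed.

End Survival.

Theorem theorem6 :
  forall p q : R, S_set p q ->
    exists eps : R, 0 < eps /\
      forall p' q' : R, 0 < p' < 1 -> 0 < q' < 1 ->
        Rabs (p' - p) < eps -> Rabs (q' - q) < eps -> S_set p' q'.
Proof.
  intros p q [Hp [Hq Hs]].
  destruct (min_ge_mass_of_survival p q ltac:(lra) ltac:(lra) (proj2 Hp) Hs)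
    as [k [n [Hk Ha]]].
  destruct (continuous_R2_eps_delta
              (fun z => trans_iter (fst z) (snd z) n (ind_min_ge (2 * k)) k k) p q
              (trans_iter p q n (ind_min_ge (2 * k)) k k - 2 / 3)
              (continuous_trans_iter _ n p q k k)) as [d [Hd Hclose]]; [lra|].
  exists d; split; [exact Hd|]; intros p' q' Hp' Hq' Hdp Hdq.
  specialize (Hclose p' q' Hdp Hdq); apply Rabs_def2 in Hclose; cbn [fst snd] in Hclose.
  split; [exact Hp'|]; split; [exact Hq'|].
  apply (survival_pos_of_min_ge p' q' ltac:(lra) ltac:(lra) k n); [lra | lra | exact Hk | lra].
Qed.
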